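(* For every integer $n\ge 0$, \[ d_{n,q}=\begin{cases} 1, & n=0,\\[4pt] \displaystyle\frac{[2]_q}{2}\frac{(-4)^n}{n!}D_{n,q}(0|1)-q\sum_{m=0}^{n-1}\frac{(-4)^{n-m-1}}{(n-m-1)!}D_{n-m-1,q}(0|1)\,C_m, & n\ge 1.\end{cases} \]
   Context: Let $p$ be a fixed odd prime, $\mathbb{C}_p$ the completion of the algebraic closure of $\mathbb{Q}_p$, with $|p|_p=1/p$. Let $q\in\mathbb{C}_p$ with $|1-q|_p<p^{-1/(p-1)}$, and $\log$ denotes the $p$-adic logarithm. Put $[x]_q=\frac{1-q^x}{1-q}$, so $[2]_q=1+q$. $C_m=\frac{1}{m+1}\binom{2m}{m}$ is the $m$-th Catalan number. The numbers $D_{n,q}(0|1)$ are defined by \[ \frac{2(q-1)+\frac{q-1}{\log q}\log(1+t)}{q^{2}(1+t)-1}=\sum_{n=0}^{\infty}D_{n,q}(0|1)\frac{t^n}{n!}. \] The $q$-analogues of the Catalan–Daehee numbers $d_{n,q}$ are defined by \[ \frac{q-1+\frac{q-1}{\log q}\cdot\frac12\log(1-4t)}{q\sqrt{1-4t}-1}=\sum_{n=0}^{\infty}d_{n,q}t^n, \] for $t\in\mathbb{C}_p$ with $|t|_p<p^{-1/(p-1)}$ (equivalently as power series in $t$). *)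

From HB Require Import structures.
From mathcomp Require Import all_boot all_order all_algebra.
Set Implicit Arguments. Unset Strict Implicit. Unset Printing Implicit Defensive.
Import Order.TTheory GRing.Theory.
Local Open Scope ring_scope.

Section PS.
Variable K : fieldType.

Definition ps := nat -> K.

Definition ps_mul (f g : ps) : ps :=
  fun n => \sum_(i < n.+1) f i * g (n - i)%N.

(* list of the first n+1 coefficients of the inverse of g (g 0 <> 0) *)
Fixpoint ps_inv_list (g : ps) (n : nat) : seq K :=
  match n with
  | 0 => [:: (g 0%N)^-1]
  | n'.+1 => let l := ps_inv_list g n' in
             rcons l (- (g 0%N)^-1 *
                      \sum_(i < n'.+1) g (n'.+1 - i)%N * nth 0 l i)
  end.

Definition ps_inv (g : ps) : ps := fun n => nth 0 (ps_inv_list g n) n.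

Definition ps_div (f g : ps) : ps := ps_mul f (ps_inv g).

(* the series of log(1 + c t) = sum_{n>=1} (-1)^(n+1) c^n t^n / n *)
Definition ps_log1p (c : K) : ps :=
  fun n => if n == 0%N then 0 else (-1) ^+ n.+1 * c ^+ n / n%:R.

Definition gbinom (a : K) (n : nat) : K :=
  (\prod_(i < n) (a - i%:R)) / (n`!)%:R.

(* the series of sqrt(1 - 4t) = (1 + (-4 t))^(1/2) *)
Definition ps_sqrt1m4 : ps := fun n => gbinom (2^-1) n * (-4) ^+ n.

(* the generating function of D_{n,q}(0|1), with lq standing for log q:
   (2(q-1) + (q-1)/lq * log(1+t)) / (q^2 (1+t) - 1) = sum D_n t^n / n! *)
Definition Dnum (q lq : K) : ps :=
  fun n => (if n == 0%N then 2 * (q - 1) else 0) + (q - 1) / lq * ps_log1p 1 n.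
Definition Dden (q : K) : ps :=
  fun n => if n == 0%N then q ^+ 2 - 1 else if n == 1%N then q ^+ 2 else 0.
Definition Dq (q lq : K) (n : nat) : K :=
  (n`!)%:R * ps_div (Dnum q lq) (Dden q) n.

(* the generating function of d_{n,q}:
   (q-1 + (q-1)/lq * (1/2) log(1-4t)) / (q sqrt(1-4t) - 1) = sum d_n t^n *)
Definition dnum (q lq : K) : ps :=
  fun n => (if n == 0%N then q - 1 else 0) + (q - 1) / lq * (2^-1 * ps_log1p (-4) n).
Definition dden (q : K) : ps :=
  fun n => q * ps_sqrt1m4 n - (if n == 0%N then 1 else 0).
Definition dq (q lq : K) (n : nat) : K := ps_div (dnum q lq) (dden q) n.

Definition catalan (m : nat) : K := ('C(m.*2, m))%:R / (m.+1)%:R.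

End PS.

From HB Require Import structures.
From mathcomp Require Import all_boot all_order all_algebra.
From mathcomp Require Import ring.
Import GRing.Theory.
Set Implicit Arguments. Unset Strict Implicit. Unset Printing Implicit Defensive.
Local Open Scope ring_scope.

(* With S = sqrt(1 - 4t), the denominator of the generating function of
   D_{n,q}(0|1), taken at -4t, is q^2 S^2 - 1 = (qS - 1)(qS + 1), and its
   numerator is twice the numerator of the generating function of d_{n,q}.
   Hence sum_n d_{n,q} t^n = (1 + qS)/2 * F(t) with
   F(t) = sum_n D_{n,q}(0|1) (-4t)^n / n!, and since tC(t) = (1 - S)/2 for the
   Catalan generating function, (1 + qS)/2 = (1 + q)/2 - q tC(t).
   To compare the n-th coefficients, all series are mapped to K[t]/(t^(n+1)),
   where the computation is a ring identity. *)

Lemma mul_bin_central m :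
  ('C(m.+1.*2, m.+1) * m.+1 = 2 * m.*2.+1 * 'C(m.*2, m))%N.
Proof.
have e1 : (m.+1.*2 * 'C(m.*2.+1, m) = m.+1 * 'C(m.+1.*2, m.+1))%N.
  exact: mul_bin_diag.
have e2 := mul_bin_down (m.*2.+1) m.
rewrite /= subSn -addnn ?leq_addr // addKn addnn in e2.
by rewrite mulnC -e1 -mul2n -mulnA -e2 mulnA.
Qed.

Section PowerSeries.
Variable K : fieldType.
Implicit Types (f g : ps K) (c : K).

Definition ps_scale c f : ps K := fun n => c ^+ n * f n.

Lemma ps_scale_mul c f g n :
  ps_scale c (ps_mul f g) n = ps_mul (ps_scale c f) (ps_scale c g) n.
Proof.
rewrite /ps_scale /ps_mul mulr_sumr; apply: eq_bigr => i _.
have le_in : (i <= n)%N by rewrite -ltnS.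
by rewrite -{1}(subnKC le_in) exprD; ring.
Qed.

Lemma size_ps_inv_list g n : size (ps_inv_list g n) = n.+1.
Proof. by elim: n => //= n IHn; rewrite size_rcons IHn. Qed.

Lemma nth_ps_inv_list g n i : (i <= n)%N -> nth 0 (ps_inv_list g n) i = ps_inv g i.
Proof.
elim: n => [|n IHn]; first by rewrite leqn0 => /eqP ->.
rewrite leq_eqVlt => /predU1P [-> //|lt_in].
by rewrite /= nth_rcons size_ps_inv_list lt_in IHn.
Qed.

Lemma ps_invS g n :
  ps_inv g n.+1 = - (g 0%N)^-1 * \sum_(i < n.+1) g (n.+1 - i)%N * ps_inv g i.
Proof.
rewrite /ps_inv /= nth_rcons size_ps_inv_list ltnn eqxx.
by congr (_ * _); apply: eq_bigr => i _; rewrite nth_ps_inv_list // -ltnS.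
Qed.

Lemma ps_mul_invl g n : g 0%N != 0 -> ps_mul (ps_inv g) g n = (n == 0)%:R.
Proof.
move=> g0; case: n => [|n]; first by rewrite /ps_mul big_ord1 mulVf.
rewrite /ps_mul big_ord_recr /= subnn ps_invS mulrAC mulNr mulVf // mulN1r.
by rewrite addrC (eq_bigr _ (fun i _ => mulrC _ _)) addNr.
Qed.

(* The coefficientwise form of (f^2)' = 2 f f'. *)
Lemma ps_mul_sqr_deriv f m :
  m%:R * ps_mul f f m = 2 * \sum_(i < m.+1) i%:R * f i * f (m - i)%N.
Proof.
have rev : \sum_(i < m.+1) i%:R * f i * f (m - i)%N =
           \sum_(i < m.+1) (m - i)%:R * f i * f (m - i)%N.
  rewrite (reindex_inj rev_ord_inj) /=; apply: eq_bigr => i _.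
  by rewrite subSS subKn 1?mulrAC // -ltnS.
rewrite mulr2n mulrDl mul1r {2}rev -big_split /ps_mul mulr_sumr /=.
apply: eq_bigr => i _; by rewrite -!mulrA -mulrDl -natrD subnKC // -ltnS.
Qed.

Lemma gbinomS c n : gbinom c n.+1 = gbinom c n * (c - n%:R) / n.+1%:R.
Proof. by rewrite /gbinom big_ord_recr /= factS natrM invfM; ring. Qed.

End PowerSeries.

Section Truncation.
Variables (K : fieldType) (n : nat).
Implicit Types (f g : ps K) (c : K).

Local Notation Xn := ('X^(n.+1) : {poly K}).
Local Notation cst := (qpolyC Xn).

Lemma coef_in_qpolyXn (p : {poly K}) i :
  (in_qpoly Xn p : {poly K})`_i = if (i <= n)%N then p`_i else 0.
Proof.
by rewrite /= mk_monic_Xn -Pdiv.RingMonic.take_poly_rmodp coef_take_poly.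
Qed.

Lemma eq_qpolyXn (x y : {poly %/ Xn}) :
  (forall i, (i <= n)%N -> (x : {poly K})`_i = (y : {poly K})`_i) -> x = y.
Proof.
move=> eq_xy; apply/val_inj/polyP => i; have [/eq_xy //|lt_ni] := leqP i n.
have small (z : {poly %/ Xn}) : (z : {poly K})`_i = 0.
  apply: nth_default; apply: leq_trans lt_ni.
  by have := size_npoly z; rewrite [in X in (_ <= X)%N]mk_monic_Xn size_polyXn.
by rewrite !small.
Qed.

Definition ps_trunc f : {poly %/ Xn} := in_qpoly Xn (\poly_(i < n.+1) f i).

Lemma coef_ps_trunc f i :
  (ps_trunc f : {poly K})`_i = if (i <= n)%N then f i else 0.
Proof. by rewrite coef_in_qpolyXn coef_poly ltnS; case: leqP. Qed.

Lemma eq_ps_trunc f g : (forall i, (i <= n)%N -> f i = g i) -> ps_trunc f = ps_trunc g.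
Proof.
by move=> eq_fg; apply: eq_qpolyXn => i le_in; rewrite !coef_ps_trunc le_in eq_fg.
Qed.

Lemma ps_trunc_delta : ps_trunc (fun i => (i == 0%N)%:R) = 1.
Proof.
apply: eq_qpolyXn => i le_in; rewrite coef_ps_trunc le_in qpolyCE coefC.
by case: i {le_in}.
Qed.

Lemma ps_truncB f g : ps_trunc (fun i => f i - g i) = ps_trunc f - ps_trunc g.
Proof.
by apply: eq_qpolyXn => i le_in; rewrite raddfB coefB !coef_ps_trunc le_in.
Qed.

Lemma ps_truncM f g : ps_trunc (ps_mul f g) = ps_trunc f * ps_trunc g.
Proof.
rewrite /ps_trunc -rmorphM; apply: eq_qpolyXn => i le_in.
rewrite !coef_in_qpolyXn le_in coef_poly ltnS le_in coefM; apply: eq_bigr => j _.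
have le_ji : (j <= i)%N by rewrite -ltnS.
by rewrite !coef_poly !ltnS (leq_trans le_ji) ?(leq_trans (leq_subr j i)).
Qed.

Lemma ps_truncZ c f : ps_trunc (fun i => c * f i) = cst c * ps_trunc f.
Proof.
have -> : cst c = in_qpoly Xn c%:P.
  by apply: eq_qpolyXn => i le_in; rewrite qpolyCE coef_in_qpolyXn le_in.
rewrite /ps_trunc -rmorphM; apply: eq_qpolyXn => i le_in.
by rewrite !coef_in_qpolyXn le_in coefCM !coef_poly ltnS le_in.
Qed.

Lemma ps_trunc_scale c f g :
  ps_trunc (ps_scale c (ps_mul f g)) = ps_trunc (ps_scale c f) * ps_trunc (ps_scale c g).
Proof. by rewrite -ps_truncM; apply: eq_ps_trunc => i _; apply: ps_scale_mul. Qed.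

End Truncation.

Section CharZero.
Variables (K : fieldType) (charK0 : [pchar K] =i pred0).

Local Notation s := (ps_sqrt1m4 K).
Let natf_eq0 n : (n%:R == 0 :> K) = (n == 0)%N := (pcharf0P K).1 charK0 n.

Lemma sqrt1m4_0 : s 0%N = 1.
Proof. by rewrite /ps_sqrt1m4 /gbinom big_ord0 divr1 mulr1. Qed.

Lemma sqrt1m4S n : n.+1%:R * s n.+1 = (4 * n%:R - 2) * s n.
Proof. by rewrite /ps_sqrt1m4 gbinomS exprS; field; rewrite nat1r !natf_eq0. Qed.

Lemma sqr_sqrt1m4S n :
  n.+1%:R * ps_mul s s n.+1 = (4 * n%:R - 4) * ps_mul s s n.
Proof.
rewrite ps_mul_sqr_deriv big_ord_recl mul0r mul0r add0r.
under eq_bigr => i _ do rewrite /bump /= subSS sqrt1m4S.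
set A := \sum_(i < n.+1) i%:R * s i * s (n - i)%N.
have -> : \sum_(i < n.+1) (4 * i%:R - 2) * s i * s (n - i)%N = 4 * A - 2 * ps_mul s s n.
  by rewrite /A /ps_mul !mulr_sumr -sumrB; apply: eq_bigr => i _; ring.
have -> : 2 * (4 * A - 2 * ps_mul s s n) = 4 * (2 * A) - 4 * ps_mul s s n by ring.
by rewrite -ps_mul_sqr_deriv; ring.
Qed.

Lemma sqr_sqrt1m4 k :
  ps_mul s s k = if k is 0 then 1 else if k is 1 then -4 else 0.
Proof.
have s2_0 : ps_mul s s 0 = 1 by rewrite /ps_mul big_ord1 sqrt1m4_0 mulr1.
have s2_1 : ps_mul s s 1 = -4.
  by have := sqr_sqrt1m4S 0; rewrite s2_0 !mul1r mulr0 add0r mulr1.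
case: k => [|[|k]] //; elim: k => [|k IHk]; apply/eqP.
  have := sqr_sqrt1m4S 1; rewrite s2_1 mulr1 subrr mul0r => /eqP.
  by rewrite mulf_eq0 natf_eq0.
have := sqr_sqrt1m4S k.+2; rewrite IHk mulr0 => /eqP.
by rewrite mulf_eq0 natf_eq0.
Qed.

Lemma catalanS m : m.+2%:R * catalan K m.+1 = 2 * m.*2.+1%:R * catalan K m.
Proof.
have /(congr1 (fun k => k%:R : K)) := mul_bin_central m.
rewrite /catalan !natrM => bin_rec.
by rewrite mulrC divfK ?natf_eq0 // mulrA -bin_rec mulfK ?natf_eq0.
Qed.

Lemma catalan_sqrt1m4 m : catalan K m = - s m.+1 / 2.
Proof.
have n2 : 2%:R != 0 :> K by rewrite natf_eq0.
elim: m => [|m IHm].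
  rewrite /catalan /ps_sqrt1m4 gbinomS /gbinom big_ord0 /= bin0 fact0 expr1.
  by field; rewrite n2 oner_eq0.
apply: (mulfI (_ : m.+2%:R != 0)); first by rewrite natf_eq0.
rewrite catalanS IHm.
transitivity (- (m.+2%:R * s m.+2) / 2); last by ring.
by rewrite sqrt1m4S -mul2n; ring.
Qed.

Definition catalan_ps : ps K := fun k => if k is m.+1 then catalan K m else 0.

Lemma catalan_psE k : catalan_ps k = 2^-1 * ((k == 0%N)%:R - s k).
Proof.
case: k => [|k]; first by rewrite /= sqrt1m4_0 subrr mulr0.
by rewrite /= catalan_sqrt1m4 sub0r mulrC.
Qed.

Variables (q lq : K).
Hypotheses (hq1 : q != 1) (hqm1 : q != -1).

Definition Dq_scaled : ps K := ps_scale (-4) (ps_div (Dnum q lq) (Dden q)).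

Lemma Dq_scaledE k : Dq_scaled k = (-4) ^+ k / k`!%:R * Dq q lq k.
Proof. by rewrite /Dq_scaled /ps_scale /Dq mulrA divfK // natf_eq0 -lt0n fact_gt0. Qed.

Lemma Dden_scaledE k :
  ps_scale (-4) (Dden q) k = q ^+ 2 * ps_mul s s k - (k == 0%N)%:R.
Proof. by rewrite sqr_sqrt1m4 /ps_scale /Dden; case: k => [|[|k]] /=; ring. Qed.

Lemma Dnum_scaledE k : ps_scale (-4) (Dnum q lq) k = 2 * dnum q lq k.
Proof.
rewrite /ps_scale /Dnum /dnum /ps_log1p; case: k => [|k] /=; first by ring.
(* [(q - 1) / lq] is kept abstract: the identity holds even for [lq = 0]. *)
by move: ((q - 1) / lq) => c; rewrite expr1n; field; rewrite nat1r !natf_eq0.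
Qed.

Lemma dq0 : dq q lq 0 = 1.
Proof.
rewrite /dq /ps_div /ps_mul big_ord1 /ps_inv /= /dnum /dden /ps_log1p /= sqrt1m4_0.
by rewrite mulr0 mulr0 addr0 mulr1 mulfV // subr_eq0.
Qed.

Variable n : nat.
Local Notation cst := (qpolyC ('X^(n.+1) : {poly K})).

Lemma ps_trunc_dq :
  ps_trunc n (fun k => (1 + q) / 2 * Dq_scaled k - q * ps_mul catalan_ps Dq_scaled k)
  = ps_trunc n (dq q lq).
Proof.
set S := ps_trunc n s; set F := ps_trunc n Dq_scaled; set C := ps_trunc n catalan_ps.
set N := ps_trunc n (dnum q lq); set E := ps_trunc n (dden q).
set I := ps_trunc n (ps_inv (dden q)).
set M := ps_trunc n (ps_scale (-4) (Dnum q lq)).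
set J := ps_trunc n (ps_scale (-4) (ps_inv (Dden q))).
set P := ps_trunc n (ps_scale (-4) (Dden q)).
have hP : P = cst (q ^+ 2) * (S * S) - 1.
  rewrite /P (eq_ps_trunc (fun k _ => Dden_scaledE k)).
  by rewrite ps_truncB ps_truncZ ps_truncM ps_trunc_delta.
have hM : M = cst 2 * N.
  by rewrite /M (eq_ps_trunc (fun k _ => Dnum_scaledE k)) ps_truncZ.
have hC : C = cst (2^-1) * (1 - S).
  rewrite /C (eq_ps_trunc (fun k _ => catalan_psE k)).
  by rewrite ps_truncZ ps_truncB ps_trunc_delta.
have hE : E = cst q * S - 1.
  rewrite /E (@eq_ps_trunc _ _ _ (fun k => q * s k - (k == 0%N)%:R)) => [|[]] //.
  by rewrite ps_truncB ps_truncZ ps_trunc_delta.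
have hJP : J * P = 1.
  rewrite -ps_trunc_scale -ps_trunc_delta; apply: eq_ps_trunc => k _.
  rewrite /ps_scale ps_mul_invl; last by rewrite /Dden /= subr_eq0 sqrf_eq1 negb_or hq1.
  by case: k => [|k]; rewrite ?mulr0 ?mulr1.
have hIE : I * E = 1.
  rewrite -ps_truncM -ps_trunc_delta; apply: eq_ps_trunc => k _.
  by rewrite ps_mul_invl // /dden sqrt1m4_0 mulr1 /= subr_eq0.
have hF : F = M * J by apply: ps_trunc_scale.
have FP : F * P = cst 2 * N by rewrite hF -mulrA hJP mulr1 hM.
have HE : (cst ((1 + q) / 2) * F - cst q * (C * F)) * E = cst (2^-1) * (F * P).
  by rewrite hE hC hP; ring.
rewrite ps_truncB !ps_truncZ ps_truncM [RHS]ps_truncM -/N -/I -/F -/C.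
rewrite -[LHS]mulr1 -hIE (mulrC I) (mulrA _ E) HE FP mulrA.
have half2 : cst (2^-1) * cst 2 = 1 by rewrite -rmorphM mulVf ?rmorph1 ?natf_eq0.
by rewrite half2 mul1r.
Qed.

Lemma dq_expansion :
  dq q lq n = (1 + q) / 2 * Dq_scaled n - q * ps_mul catalan_ps Dq_scaled n.
Proof. by move/(congr1 val)/polyP/(_ n): ps_trunc_dq; rewrite !coef_ps_trunc leqnn. Qed.

End CharZero.

Theorem theorem1 (K : fieldType) (q lq : K)
  (hchar : [pchar K] =i pred0)
  (hq1 : q != 1) (hqm1 : q != -1) (hlq : lq != 0) (n : nat) :
  dq q lq n =
    if n == 0%N then 1
    else (1 + q) / 2 * ((-4) ^+ n / (n`!)%:R) * Dq q lq n
         - q * \sum_(m < n) ((-4) ^+ (n - m - 1) / ((n - m - 1)`!)%:R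
                             * Dq q lq (n - m - 1) * catalan K m).
Proof.
case: n => [|n] /=; first exact: dq0.
rewrite dq_expansion // Dq_scaledE // mulrA; congr (_ - _ * _).
rewrite /ps_mul big_ord_recl mul0r add0r; apply: eq_bigr => i _.
by rewrite /bump /= subSS Dq_scaledE // mulrC add0n subnAC subn1.
Qed.
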